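(* If a collection $\mathcal Q$ of probability measures on $\{0,1\}^{\mathbb N}$ is non-separable in its means, then there exists $\gamma>0$ such that $\mathrm{Mean}(\mathcal Q)$ is infinitely sequentially $\gamma$-fat-shattered.
   Context: For a probability measure $\mu$ on $\{0,1\}^{\mathbb N}$, $\mathrm{Mean}(\mu)\in[0,1]^{\mathbb N}$ is the vector whose $j$-th coordinate is $\mathbb E[X_j]$ for $X\sim\mu$; $\mathrm{Mean}(\mathcal Q)=\{\mathrm{Mean}(\mu):\mu\in\mathcal Q\}$. A countable $\varepsilon$-cover of $\mathrm{Mean}(\mathcal Q)$ is a countable set $C\subset[0,1]^{\mathbb N}$ such that every $q\in\mathrm{Mean}(\mathcal Q)$ has some $p\in C$ with $\|q-p\|_\infty<\varepsilon$; $\mathcal Q$ is non-separable in its means if for some $\varepsilon>0$ no countable $\varepsilon$-cover exists. For $M\subseteq[0,1]^{\mathbb N}$, $\gamma>0$ and $d\in\mathbb N$, a $\gamma$-shattered tree of depth $d$ for $M$ is an assignment, to each node $v$ of the complete binary tree of depth $d$ (nodes identified with binary strings of length $0,1,\dots,d-1$), of a coordinate $i_v\in\mathbb N$ and a value $r_v\in(0,1)$, such that for every binary string $(b_1,\dots,b_d)$ there exists $q\in M$ with, for each $k=1,\dots,d$ and $v=(b_1,\dots,b_{k-1})$: $q_{i_v}\le r_v-\gamma$ if $b_k=0$ and $q_{i_v}\ge r_v+\gamma$ if $b_k=1$. $M$ is infinitely sequentially $\gamma$-fat-shattered if for every $d\in\mathbb N$ there is a $\gamma$-shattered tree of depth $d$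 for $M$. *)

From HB Require Import structures.
From mathcomp Require Import all_boot all_order all_algebra.
From mathcomp Require Import all_classical all_reals all_analysis.
Set Implicit Arguments. Unset Strict Implicit. Unset Printing Implicit Defensive.
Import Order.TTheory GRing.Theory Num.Theory.
Local Open Scope classical_set_scope.
Local Open Scope ring_scope.

(* The Cantor space {0,1}^N, points x : nat -> bool (true = 1). *)
Definition cylinders : set (set (nat -> bool)) :=
  [set A | exists j b, A = [set x | x j = b]].

Definition cantor_mspace := g_sigma_algebraType cylinders.

Definition Mean {R : realType} (mu : probability cantor_mspace R)
  : nat -> R :=
  fun j => fine (\int[mu]_(x in [set: cantor_mspace]) ((x j)%:R)%:E)%E.

Definition MeanSet {R : realType} (Q : set (probability cantor_mspace R))
  : set (nat -> R) := Mean @` Q.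

Definition unit_cube {R : realType} : set (nat -> R) :=
  [set p | forall j, 0 <= p j <= 1].

(* ||q - p||_oo < eps, with ||.||_oo the supremum over coordinates *)
Definition sup_dist_lt {R : realType} (q p : nat -> R) (eps : R) : Prop :=
  exists2 b, b < eps & forall j, `|q j - p j| <= b.

Definition countable_cover {R : realType} (M : set (nat -> R)) (eps : R)
    (C : set (nat -> R)) : Prop :=
  [/\ countable C, C `<=` unit_cube &
      forall q, M q -> exists2 p, C p & sup_dist_lt q p eps].

Definition non_separable_in_means {R : realType}
    (Q : set (probability cantor_mspace R)) : Prop :=
  exists2 eps : R, 0 < eps &
    ~ exists C, countable_cover (MeanSet Q) eps C.

(* A gamma-shattered tree of depth d: nodes are binary strings v with
   size v < d; labels i v (a coordinate) and r v in (0,1). *)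
Definition shattered_tree {R : realType} (M : set (nat -> R)) (gamma : R)
    (d : nat) (i : seq bool -> nat) (r : seq bool -> R) : Prop :=
  (forall v : seq bool, (size v < d)%N -> 0 < r v < 1) /\
  forall bs : seq bool, size bs = d ->
    exists2 q, M q &
      forall k : nat, (k < d)%N ->
        let v := take k bs in
        if nth false bs k then r v + gamma <= q (i v)
        else q (i v) <= r v - gamma.

Definition inf_seq_fat_shattered {R : realType} (M : set (nat -> R))
    (gamma : R) : Prop :=
  forall d : nat, exists i r, shattered_tree M gamma d i r.

From HB Require Import structures.
From mathcomp Require Import all_boot all_order all_algebra.
From mathcomp Require Import all_classical all_reals all_analysis.
From mathcomp Require Import lra.
Import Order.TTheory GRing.Theory Num.Theory.
Local Open Scope classical_set_scope.
Local Open Scope ring_scope.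

(* Call S "coverable" if a countable set of points eps-covers it in sup
   distance. If S is not coverable and 3 g < 2 eps, some coordinate i and
   threshold r split S into two non-coverable parts {q_i <= r - g} and
   {q_i >= r + g}. Otherwise let K_i be the least k with {q_i <= k g}
   non-coverable: the parts of S below K_i g - g or above K_i g + 2 g in some
   coordinate are countable unions of coverable sets, and what remains lies in
   a box of sup-radius 3 g / 2 < eps around (K_i g + g / 2)_i. Iterating the
   split d times grows a g-shattered tree of depth d. *)

Lemma Mean_unit_cube (R : realType) (mu : probability cantor_mspace R) :
  unit_cube (Mean mu).
Proof.
move=> j; pose A : set cantor_mspace := [set x | x j = true].
have mA : measurable A by apply: sub_sigma_algebra; exists j, true.
have coord_indic (x : nat -> bool) : (x j)%:R = \1_A x :> R.
  rewrite indicE; case xj: (x j); first by rewrite mem_set.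
  by rewrite memNset // /A /= xj.
have -> : Mean mu j = fine (mu A).
  rewrite /Mean -[in RHS](setIT A) -integral_indic //.
  by congr fine; apply: eq_integral => x _; rewrite coord_indic.
have : (0 <= mu A <= 1)%E by rewrite measure_ge0 probability_le1.
by case: (mu A) => [r| |] //= _; rewrite lexx ler01.
Qed.

Section Coverable.
Context {R : realType}.
Implicit Types (eps g r : R) (S T : set (nat -> R)).

Definition coverable eps S := exists C : set (nat -> R), countable C /\
  forall q, S q -> exists2 p, C p & sup_dist_lt q p eps.

Lemma coverable_subset eps S T : S `<=` T -> coverable eps T -> coverable eps S.
Proof. by move=> ST [C [cC coverC]]; exists C; split => // q /ST /coverC. Qed.

Lemma coverable0 eps : coverable eps set0.
Proof. by exists set0; split => //; exact: countable0. Qed.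

Lemma coverable_bigcup eps (F : nat -> set (nat -> R)) :
  (forall n, coverable eps (F n)) -> coverable eps (\bigcup_n F n).
Proof.
move=> /choice[C coverF]; exists (\bigcup_n C n); split.
  by apply: bigcup_countable => [|n _]; [exact: countableP | case: (coverF n)].
move=> q [n _ Fnq]; have [_ coverFn] := coverF n.
by have [p Cnp qp] := coverFn q Fnq; exists p => //; exists n.
Qed.

Lemma coverableU eps S T :
  coverable eps S -> coverable eps T -> coverable eps (S `|` T).
Proof.
move=> coverS coverT.
apply: (@coverable_subset _ _ (\bigcup_n (if n is 0 then S else T))).
  by move=> q [Sq|Tq]; [exists 0%N | exists 1%N].
by apply: coverable_bigcup => -[|n].
Qed.

Lemma coverable_ball eps S (c : nat -> R) :
  (forall q, S q -> sup_dist_lt q c eps) -> coverable eps S.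
Proof. by move=> Sc; exists [set c]; split => [|q /Sc]; [exact: countable1 | exists c]. Qed.

Lemma uncoverable_neq0 {eps S} : ~ coverable eps S -> S !=set0.
Proof.
move=> uncovS; apply/set0P/negP => /eqP S0.
by apply: uncovS; rewrite S0; exact: coverable0.
Qed.

Definition clamp01 (x : R) : R := if x < 0 then 0 else if 1 < x then 1 else x.

Lemma clamp01_unit (x : R) : 0 <= clamp01 x <= 1.
Proof. by rewrite /clamp01; case: ltP => ?; [|case: ltP => ?]; apply/andP; lra. Qed.

Lemma dist_clamp01 (q x : R) : 0 <= q <= 1 -> `|q - clamp01 x| <= `|q - x|.
Proof.
move=> /andP[q0 q1]; rewrite /clamp01.
case: ltP => x0; last case: ltP => x1 //.
- by rewrite subr0 !ger0_norm //; lra.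
- by rewrite !ler0_norm //; lra.
Qed.

(* Projecting the centres onto the cube does not move them away from points
   of the cube. *)
Lemma coverable_countable_cover {eps S} : S `<=` unit_cube ->
  coverable eps S -> exists C, countable_cover S eps C.
Proof.
move=> Scube [C [cC coverS]]; exists ((fun p j => clamp01 (p j)) @` C); split.
- exact: sub_countable (card_image_le _ _) cC.
- by move=> _ [p _ <-] j; exact: clamp01_unit.
- move=> q Sq; have [p Cp [b b_lt qp]] := coverS q Sq.
  exists (fun j => clamp01 (p j)); first by exists p.
  by exists b => // j; apply: le_trans (qp j); exact/dist_clamp01/Scube.
Qed.

Definition cut S g (i : nat) r (b : bool) : set (nat -> R) :=
  [set q | S q /\ (if b then r + g <= q i else q i <= r - g)].

Definition level S g (i : nat) (k : nat) : set (nat -> R) :=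
  [set q | S q /\ q i <= k%:R * g].

Lemma least_uncoverable_level eps S g i : 0 < g -> S `<=` unit_cube ->
  ~ coverable eps S -> exists k, ~ coverable eps (level S g i k) /\
    forall k', (k' < k)%N -> coverable eps (level S g i k').
Proof.
move=> g0 Scube uncovS.
pose N := Num.Def.archi_bound g^-1.
have ginvN : g^-1 < N%:R by apply: archi_boundP; rewrite invr_ge0 ltW.
have exP : exists k, `[< ~ coverable eps (level S g i k) >].
  exists N; apply/asboolP => covN; apply: uncovS; apply: coverable_subset covN.
  move=> q Sq; split => //; have /andP[_ q1] := Scube q Sq i.
  have : g^-1 * g = 1 by rewrite mulVf // gt_eqF.
  nra.
case: (ex_minnP exP) => k /asboolP uncovk kmin; exists k; split => // k' k'k.
apply: contrapT => uncovk'.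
by have := kmin k' (asboolT uncovk'); rewrite leqNgt k'k.
Qed.

Lemma uncoverable_split {eps S g} : 0 < g -> 3 * g < 2 * eps ->
  S `<=` unit_cube -> ~ coverable eps S ->
  exists i r, ~ coverable eps (cut S g i r false) /\
              ~ coverable eps (cut S g i r true).
Proof.
move=> g0 g_eps Scube uncovS.
have /choice[K Kmin] := fun i => least_uncoverable_level eps S g i g0 Scube uncovS.
apply: contrapT => nosplit; apply: uncovS.
have cut_true i r : ~ coverable eps (cut S g i r false) ->
    coverable eps (cut S g i r true).
  by move=> uncovF; apply: contrapT => uncovT; apply: nosplit; exists i, r.
pose lo i := [set q : nat -> R | S q /\ q i <= (K i)%:R * g - g].
pose hi i := [set q : nat -> R | S q /\ (K i)%:R * g + 2 * g <= q i].
pose box := [set q : nat -> R | S q /\ forall i,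
   (K i)%:R * g - g < q i < (K i)%:R * g + 2 * g].
apply: (@coverable_subset _ _ ((\bigcup_i lo i `|` \bigcup_i hi i) `|` box)).
  move=> q Sq; have [[i ?]|nolo] := pselect (exists i, lo i q).
    by left; left; exists i.
  have [[i ?]|nohi] := pselect (exists i, hi i q); first by left; right; exists i.
  right; split => // i; rewrite !ltNge; apply/andP; split; apply/negP => ?.
    by apply: nolo; exists i.
  by apply: nohi; exists i.
apply: coverableU; first apply: coverableU.
- apply: coverable_bigcup => i; have [_ below] := Kmin i; case Ki: (K i) => [|k].
    apply: coverable_subset (coverable0 eps) => q [Sq].
    by have /andP[q0 _] := Scube q Sq i; rewrite Ki /=; lra.
  apply: coverable_subset (below k _); last by rewrite Ki.
  by move=> q [Sq qi]; split => //; move: qi; rewrite Ki -addn1 natrD; lra.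
- apply: coverable_bigcup => i; have [uncovK _] := Kmin i.
  apply: coverable_subset (cut_true i ((K i)%:R * g + g) _).
    by move=> q [Sq ?]; split => //=; lra.
  move=> covF; apply: uncovK; apply: coverable_subset covF => q [? ?].
  by split => //=; lra.
- apply: (coverable_ball eps _ (fun i => (K i)%:R * g + g / 2)) => q [_ qbox].
  exists (3 * g / 2); first lra.
  by move=> i; have /andP[? ?] := qbox i; rewrite ler_norml; apply/andP; split; lra.
Qed.

Lemma shattered_tree_node (M : set (nat -> R)) g d (i0 : nat) r0
    (i_lo i_hi : seq bool -> nat) (r_lo r_hi : seq bool -> R) :
  0 < r0 < 1 ->
  shattered_tree (cut M g i0 r0 false) g d i_lo r_lo ->
  shattered_tree (cut M g i0 r0 true) g d i_hi r_hi ->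
  shattered_tree M g d.+1
    (fun v => if v is b :: v' then if b then i_hi v' else i_lo v' else i0)
    (fun v => if v is b :: v' then if b then r_hi v' else r_lo v' else r0).
Proof.
move=> r0_01 [r_lo01 shatter_lo] [r_hi01 shatter_hi]; split.
  by case=> [|[] v] //=; [exact: r_hi01 | exact: r_lo01].
case=> [|[] bs] //= [size_bs].
- have [q [Mq q_root] q_branch] := shatter_hi bs size_bs.
  by exists q => // -[|k] //= /q_branch.
- have [q [Mq q_root] q_branch] := shatter_lo bs size_bs.
  by exists q => // -[|k] //= /q_branch.
Qed.

Lemma uncoverable_shattered eps g d S : 0 < g -> 3 * g < 2 * eps ->
  S `<=` unit_cube -> ~ coverable eps S ->
  exists i (r : seq bool -> R), shattered_tree S g d i r.
Proof.
move=> g0 g_eps; elim: d S => [|d IHd] S Scube uncovS.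
  have [q Sq] := uncoverable_neq0 uncovS.
  by exists (fun _ => 0%N), (fun _ => 1 / 2); split => // bs _; exists q.
have [i0 [r0 [uncov_lo uncov_hi]]] := uncoverable_split g0 g_eps Scube uncovS.
have cut_cube b : cut S g i0 r0 b `<=` unit_cube by move=> q [/Scube].
have [i_lo [r_lo tree_lo]] := IHd (cut S g i0 r0 _) (cut_cube false) uncov_lo.
have [i_hi [r_hi tree_hi]] := IHd (cut S g i0 r0 _) (cut_cube true) uncov_hi.
have [q_lo [S_lo lo_i0]] := uncoverable_neq0 uncov_lo.
have [q_hi [S_hi hi_i0]] := uncoverable_neq0 uncov_hi.
have r0_01 : 0 < r0 < 1.
  have /andP[lo0 _] := Scube q_lo S_lo i0; have /andP[_ hi1] := Scube q_hi S_hi i0.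
  by apply/andP; split; lra.
by eexists; eexists; exact: shattered_tree_node r0_01 tree_lo tree_hi.
Qed.

End Coverable.

Theorem mainTheorem12 (R : realType) (Q : set (probability cantor_mspace R)) :
  non_separable_in_means Q ->
  exists2 gamma : R, 0 < gamma & inf_seq_fat_shattered (MeanSet Q) gamma.
Proof.
move=> [eps eps0 no_cover].
have means_cube : MeanSet Q `<=` unit_cube.
  by move=> _ [mu _ <-]; exact: Mean_unit_cube.
exists (eps / 2) => [|d]; first lra.
apply: (uncoverable_shattered eps) => //; try lra.
by move=> /(coverable_countable_cover means_cube).
Qed.
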